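(* Let $L$ be a lattice with permutable congruences. Then $\operatorname{Con}_c L$ satisfies $\mathrm{URP}_1$ (that is, it satisfies $\mathrm{URP}_1$ at every one of its elements).
   Context: $\operatorname{Con}_c L$ denotes the $\{\vee,0\}$-semilattice of compact (i.e. finitely generated) congruences of a lattice $L$. A lattice has permutable congruences if $\alpha\beta=\beta\alpha$ for all congruences $\alpha,\beta$, where $\alpha\beta=\{(x,y): \exists z,\ (x,z)\in\alpha,\ (z,y)\in\beta\}$. Let $S$ be a $\{\vee,0\}$-semilattice and $\varepsilon\in S$. $S$ satisfies $\mathrm{URP}_1$ at $\varepsilon$ if for every family $((\alpha_i,\beta_i))_{i\in I}$ of elements of $S\times S$ with $\alpha_i\vee\beta_i=\varepsilon$ for all $i$, there exist a family $((\alpha_i^*,\beta_i^* ))_{i\in I}$ in $S\times S$ and a family $(\gamma_{i,j})_{(i,j)\in I\times I}$ in $S$ such that for all $i,j,k\in I$: (i) $\alpha_i^*\leq\alpha_i$, $\beta_i^*\leq\beta_i$, $\alpha_i^*\vee\beta_i^*=\varepsilon$; (ii) $\gamma_{i,j}\leq\alpha_i^*$ and $\gamma_{i,j}\leq\beta_j^*$; (iii) $\alpha_i^*\leq\alpha_j^*\vee\gamma_{i,j}$ and $\beta_j^*\leq\beta_i^*\vee\gamma_{i,j}$; (iv) $\gamma_{i,k}\leq\gamma_{i,j}\vee\gamma_{j,k}$. *)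

From mathcomp Require Import all_boot all_order.
Set Implicit Arguments. Unset Strict Implicit. Unset Printing Implicit Defensive.
Import Order.TTheory.
Local Open Scope order_scope.

Section Relations.
Variable T : Type.

Definition rel_le (R S : T -> T -> Prop) : Prop := forall x y, R x y -> S x y.
Definition rel_eq (R S : T -> T -> Prop) : Prop := forall x y, R x y <-> S x y.

Definition rel_comp (R S : T -> T -> Prop) : T -> T -> Prop :=
  fun x y => exists z, R x z /\ S z y.
End Relations.

Section Congruences.
Variables (d : Order.disp_t) (L : latticeType d).

Definition is_congruence (th : L -> L -> Prop) : Prop :=
  [/\ (forall x, th x x),
      (forall x y, th x y -> th y x),
      (forall x y z, th x y -> th y z -> th x z),
      (forall a b c e, th a b -> th c e -> th (a `&` c) (b `&` e))
    & (forall a b c e, th a b -> th c e -> th (a `|` c) (b `|` e))].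

Definition con_gen (R : L -> L -> Prop) : L -> L -> Prop :=
  fun x y => forall th, is_congruence th -> rel_le R th -> th x y.

Definition con_join (a b : L -> L -> Prop) : L -> L -> Prop :=
  con_gen (fun x y => a x y \/ b x y).

(* Compact (= finitely generated) congruences: the elements of Con_c L. *)
Definition compact_con (th : L -> L -> Prop) : Prop :=
  exists s : seq (L * L), rel_eq th (con_gen (fun x y => (x, y) \in s)).

Definition congruence_permutable : Prop :=
  forall a b : L -> L -> Prop, is_congruence a -> is_congruence b ->
    rel_eq (rel_comp a b) (rel_comp b a).
End Congruences.

(* URP_1 at eps for a {\/,0}-semilattice presented as the elements of X
   satisfying S, with order le, join, and equality eqX. *)
Definition URP1_at {X : Type} (S : X -> Prop) (le : X -> X -> Prop)
    (join : X -> X -> X) (eqX : X -> X -> Prop) (eps : X) : Prop :=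
  forall (I : Type) (a b : I -> X),
    (forall i, [/\ S (a i), S (b i) & eqX (join (a i) (b i)) eps]) ->
    exists (a' b' : I -> X) (g : I -> I -> X),
      (forall i, S (a' i) /\ S (b' i)) /\
      (forall i j, S (g i j)) /\
      (forall i, [/\ le (a' i) (a i), le (b' i) (b i)
                   & eqX (join (a' i) (b' i)) eps]) /\
      (forall i j, le (g i j) (a' i) /\ le (g i j) (b' j)) /\
      (forall i j, le (a' i) (join (a' j) (g i j)) /\
                   le (b' j) (join (b' i) (g i j))) /\
      (forall i j k, le (g i k) (join (g i j) (g j k))).

Definition ConcL_URP1 (d : Order.disp_t) (L : latticeType d) : Prop :=
  forall eps : L -> L -> Prop, compact_con eps ->
    URP1_at (@compact_con d L) (@rel_le L) (@con_join d L) (@rel_eq L) eps.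

(** In a congruence-permutable lattice the join of two congruences is their
    relational product, so for a generator [(x, y)] of [eps = a_i \/ b_i] the
    interval [[x /\ y, x \/ y]] contains a point [z_i] with
    [x /\ y  a_i  z_i  b_i  x \/ y].  Splitting every generator at these
    points gives [a_i* = Con(x /\ y, z_i)] and [b_i* = Con(z_i, x \/ y)], and
    [g_ij = Con(z_j, z_i \/ z_j)] measures the gap between the splitting
    points; conditions (ii)-(iv) are then identities in the lattice. *)
From mathcomp Require Import all_boot all_order.
From Stdlib Require Import ClassicalEpsilon.
Set Implicit Arguments. Unset Strict Implicit. Unset Printing Implicit Defensive.
Import Order.TTheory.
Local Open Scope order_scope.

Lemma choice2 (A B C : Type) (R : A -> B -> C -> Prop) :
  (forall a b, exists c, R a b c) -> exists f, forall a b, R a b (f a b).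
Proof.
move=> ex_c; apply: (choice (fun a (g : B -> C) => forall b, R a b (g b))) => a.
exact: (choice (R a)).
Qed.

Section Congruence.
Variables (d : Order.disp_t) (L : latticeType d) (th : L -> L -> Prop).
Hypothesis thC : is_congruence th.

Lemma congr_refl x : th x x.
Proof. by case: thC. Qed.

Lemma congr_sym x y : th x y -> th y x.
Proof. by case: thC => _ sym _ _ _; apply: sym. Qed.

Lemma congr_trans x y w : th x y -> th y w -> th x w.
Proof. by case: thC => _ _ trans _ _; apply: trans. Qed.

Lemma congr_meet a b c e : th a b -> th c e -> th (a `&` c) (b `&` e).
Proof. by case: thC => _ _ _ meet _; apply: meet. Qed.

Lemma congr_join a b c e : th a b -> th c e -> th (a `|` c) (b `|` e).
Proof. by case: thC => _ _ _ _ join; apply: join. Qed.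

Lemma congr_meetr c x y : th x y -> th (x `&` c) (y `&` c).
Proof. by move/congr_meet; apply; apply: congr_refl. Qed.

Lemma congr_joinr c x y : th x y -> th (x `|` c) (y `|` c).
Proof. by move/congr_join; apply; apply: congr_refl. Qed.

Lemma congr_meet_join x y : th x y <-> th (x `&` y) (x `|` y).
Proof.
split=> xy.
  have x_xy : th x (x `&` y) by have := congr_meet (congr_refl x) xy; rewrite meetxx.
  have x_yx : th x (x `|` y) by have := congr_join (congr_refl x) xy; rewrite joinxx.
  exact: congr_trans (congr_sym x_xy) x_yx.
have xy_x : th (x `&` y) x.
  by have := congr_meetr x xy; rewrite meetAC meetxx (meetC (x `|` y)) joinKI.
have xy_y : th (x `&` y) y by have := congr_meetr y xy; rewrite -meetA meetxx joinIK.
exact: congr_trans (congr_sym xy_x) xy_y.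
Qed.

Lemma congr_interval x y w : th x y -> x <= w -> w <= y -> th x w.
Proof.
move=> xy xw wy; have := congr_meetr w (congr_sym xy).
by rewrite (meet_r wy) (meet_l xw) => /congr_sym.
Qed.

End Congruence.

Section Generation.
Variables (d : Order.disp_t) (L : latticeType d).
Implicit Types (R th : L -> L -> Prop).

Lemma congruence_rel_eq R th : rel_eq R th -> is_congruence R -> is_congruence th.
Proof.
move=> Rth RC; split.
- by move=> x; apply/Rth; apply: congr_refl.
- by move=> x y /Rth xy; apply/Rth; apply: congr_sym.
- by move=> x y w /Rth xy /Rth yw; apply/Rth; exact: (congr_trans RC xy yw).
- by move=> a b c e /Rth ab /Rth ce; apply/Rth; apply: congr_meet.
- by move=> a b c e /Rth ab /Rth ce; apply/Rth; apply: congr_join.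
Qed.

Lemma con_gen_congruence R : is_congruence (con_gen R).
Proof.
split.
- by move=> x th thC _; apply: congr_refl.
- by move=> x y xy th thC Rth; apply: congr_sym; apply: xy.
- by move=> x y w xy yw th thC Rth; exact: (congr_trans thC (xy _ thC Rth) (yw _ thC Rth)).
- by move=> a b c e ab ce th thC Rth; apply: (congr_meet thC); [apply: ab | apply: ce].
- by move=> a b c e ab ce th thC Rth; apply: (congr_join thC); [apply: ab | apply: ce].
Qed.

Lemma con_gen_sub R : rel_le R (con_gen R).
Proof. by move=> x y xy th _; apply. Qed.

Lemma con_gen_least R th : is_congruence th -> rel_le R th -> rel_le (con_gen R) th.
Proof. by move=> thC Rth x y; apply. Qed.

Lemma compact_congruence th : compact_con th -> is_congruence th.
Proof.
case=> s eq_th; apply: congruence_rel_eq (con_gen_congruence _).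
by move=> x y; split=> /eq_th.
Qed.

Lemma con_joinl R th : rel_le R (con_join R th).
Proof. by move=> x y xy; apply: con_gen_sub; left. Qed.

Lemma con_joinr R th : rel_le th (con_join R th).
Proof. by move=> x y xy; apply: con_gen_sub; right. Qed.

Lemma con_join_congruence R th : is_congruence (con_join R th).
Proof. exact: con_gen_congruence. Qed.

Lemma con_join_least R th rho :
  is_congruence rho -> rel_le R rho -> rel_le th rho -> rel_le (con_join R th) rho.
Proof. by move=> rhoC Rrho thrho; apply: con_gen_least => // x y []; auto. Qed.

Definition con_gen_on (s : seq (L * L)) (f g : L * L -> L) : L -> L -> Prop :=
  con_gen (fun x y => exists2 p, p \in s & x = f p /\ y = g p).

Lemma con_gen_on_compact s f g : compact_con (con_gen_on s f g).
Proof.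
exists [seq (f p, g p) | p <- s] => x y; split=> xy th thC Rth; apply: xy => // u v.
- by case=> p ps [-> ->]; apply/Rth/map_f.
- by case/mapP=> p ps [-> ->]; apply: Rth; exists p.
Qed.

Lemma con_gen_on_least s f g th :
  is_congruence th -> (forall p, p \in s -> th (f p) (g p)) ->
  rel_le (con_gen_on s f g) th.
Proof. by move=> thC fg; apply: con_gen_least => // x y [p ps [-> ->]]; apply: fg. Qed.

End Generation.

Arguments con_joinl {d L} R th [x y].
Arguments con_joinr {d L} R th [x y].

Definition lo {d : Order.disp_t} {L : latticeType d} (p : L * L) := p.1 `&` p.2.
Definition hi {d : Order.disp_t} {L : latticeType d} (p : L * L) := p.1 `|` p.2.

Lemma lo_le_hi (d : Order.disp_t) (L : latticeType d) (p : L * L) : lo p <= hi p.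
Proof. exact: le_trans (leIl _ _) (leUl _ _). Qed.

Lemma con_gen_lo_hi (d : Order.disp_t) (L : latticeType d) (s : seq (L * L)) p :
  p \in s -> con_gen (fun x y => (x, y) \in s) (lo p) (hi p).
Proof.
case: p => x y xy; apply/(congr_meet_join (con_gen_congruence _) x y).
exact: con_gen_sub.
Qed.

Section Permutable.
Variables (d : Order.disp_t) (L : latticeType d).
Hypothesis permL : congruence_permutable L.

Lemma rel_comp_congruence (a b : L -> L -> Prop) :
  is_congruence a -> is_congruence b -> is_congruence (rel_comp a b).
Proof.
move=> aC bC; have ab_ba := permL aC bC; split.
- by move=> x; exists x; split; apply: congr_refl.
- move=> x y [w [xw wy]]; apply/ab_ba.
  by exists w; split; apply: congr_sym.
- move=> x y v [w [xw wy]] [w' [yw' w'v]].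
  have [t [wt tw']] : rel_comp a b w w' by apply/ab_ba; exists y.
  by exists t; split; [exact: (congr_trans aC xw wt) | exact: (congr_trans bC tw' w'v)].
- move=> x y x' y' [w [xw wy]] [w' [xw' w'y']].
  by exists (w `&` w'); split; apply: congr_meet.
- move=> x y x' y' [w [xw wy]] [w' [xw' w'y']].
  by exists (w `|` w'); split; apply: congr_join.
Qed.

Lemma con_join_interpolate (a b : L -> L -> Prop) x y :
  is_congruence a -> is_congruence b -> con_join a b x y -> x <= y ->
  exists w, [/\ x <= w, w <= y, a x w & b w y].
Proof.
move=> aC bC xy le_xy.
have [w [xw wy]] : rel_comp a b x y.
  apply: (con_join_least _ _ _ xy); first exact: rel_comp_congruence.
  - by move=> u v uv; exists v; split=> //; apply: congr_refl.
  - by move=> u v uv; exists u; split=> //; apply: congr_refl.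
exists ((w `|` x) `&` y); split.
- by rewrite lexI leUr.
- exact: leIr.
- by have := congr_meetr aC y (congr_joinr aC x xw); rewrite joinxx (meet_l le_xy).
- by have := congr_meetr bC y (congr_joinr bC x wy); rewrite (join_l le_xy) meetxx.
Qed.

Lemma con_gen_interpolate (a b : L -> L -> Prop) (s : seq (L * L)) p :
  is_congruence a -> is_congruence b ->
  rel_le (con_gen (fun x y => (x, y) \in s)) (con_join a b) ->
  exists w, p \in s -> [/\ lo p <= w, w <= hi p, a (lo p) w & b w (hi p)].
Proof.
move=> aC bC sab; case: (boolP (p \in s)) => ps; last by exists (lo p).
have [w wP] := con_join_interpolate aC bC (sab _ _ (con_gen_lo_hi ps)) (lo_le_hi p).
by exists w.
Qed.

End Permutable.

Section Splitting.
Variables (d : Order.disp_t) (L : latticeType d) (I : Type).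
Variables (s : seq (L * L)) (z : I -> L * L -> L).

Definition split_lo i := con_gen_on s lo (z i).
Definition split_hi i := con_gen_on s (z i) hi.
Definition split_gap i j := con_gen_on s (z j) (fun p => z i p `|` z j p).

Lemma split_lo_gen i p : p \in s -> split_lo i (lo p) (z i p).
Proof. by move=> ps; apply: con_gen_sub; exists p. Qed.
Arguments split_lo_gen i [p].

Lemma split_hi_gen i p : p \in s -> split_hi i (z i p) (hi p).
Proof. by move=> ps; apply: con_gen_sub; exists p. Qed.
Arguments split_hi_gen i [p].

Lemma split_gap_gen i j p : p \in s -> split_gap i j (z j p) (z i p `|` z j p).
Proof. by move=> ps; apply: con_gen_sub; exists p. Qed.
Arguments split_gap_gen i j [p].

Lemma split_gap_trans i j k :
  rel_le (split_gap i k) (con_join (split_gap i j) (split_gap j k)).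
Proof.
have rhoC := con_join_congruence (split_gap i j) (split_gap j k).
apply: (con_gen_on_least rhoC) => p ps.
have zk_zjk := con_joinr (split_gap i j) _ (split_gap_gen j k ps).
have := congr_joinr rhoC (z k p) (con_joinl _ (split_gap j k) (split_gap_gen i j ps)).
rewrite -joinA => zjk_zijk.
have := congr_joinr rhoC (z i p) zk_zjk.
rewrite (joinC (z k p)) (joinC (z j p `|` z k p)) => zik_zijk.
exact: (congr_trans rhoC (congr_trans rhoC zk_zjk zjk_zijk) (congr_sym rhoC zik_zijk)).
Qed.

Hypothesis lo_z : forall i p, p \in s -> lo p <= z i p.

Lemma split_gap_le_lo i j : rel_le (split_gap i j) (split_lo i).
Proof.
apply: (con_gen_on_least (con_gen_congruence _)) => p ps.
have := congr_joinr (con_gen_congruence _) (z j p) (split_lo_gen i ps).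
by rewrite join_r ?lo_z.
Qed.

Lemma split_lo_le_gap i j : rel_le (split_lo i) (con_join (split_lo j) (split_gap i j)).
Proof.
have rhoC := con_join_congruence (split_lo j) (split_gap i j).
apply: (con_gen_on_least rhoC) => p ps.
have := congr_meetr rhoC (z i p) (congr_trans rhoC
  (con_joinl _ _ (split_lo_gen j ps)) (con_joinr _ _ (split_gap_gen i j ps))).
by rewrite (meet_l (lo_z _ ps)) meetC joinKI.
Qed.

Hypothesis z_hi : forall i p, p \in s -> z i p <= hi p.

Lemma split_gap_le_hi i j : rel_le (split_gap i j) (split_hi j).
Proof.
have hiC : is_congruence (split_hi j) := con_gen_congruence _.
apply: (con_gen_on_least hiC) => p ps.
have := congr_joinr hiC (z i p) (split_hi_gen j ps).
rewrite (join_l (z_hi _ ps)) (joinC (z j p)) => zij_hi.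
exact: (congr_trans hiC (split_hi_gen j ps) (congr_sym hiC zij_hi)).
Qed.

Lemma split_hi_le_gap i j : rel_le (split_hi j) (con_join (split_hi i) (split_gap i j)).
Proof.
have rhoC := con_join_congruence (split_hi i) (split_gap i j).
apply: (con_gen_on_least rhoC) => p ps.
have := congr_joinr rhoC (z j p) (con_joinl _ _ (split_hi_gen i ps)).
rewrite (join_l (z_hi _ ps)) => zij_hi.
exact: (congr_trans rhoC (con_joinr _ _ (split_gap_gen i j ps)) zij_hi).
Qed.

Lemma split_join_eq i :
  rel_eq (con_join (split_lo i) (split_hi i)) (con_gen (fun x y => (x, y) \in s)).
Proof.
have epsC := con_gen_congruence (fun x y => (x, y) \in s).
have lo_zi p (ps : p \in s) := congr_interval epsC (con_gen_lo_hi ps) (lo_z i ps) (z_hi i ps).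
have rhoC := con_join_congruence (split_lo i) (split_hi i).
move=> x y; split; first apply: (con_join_least epsC).
- by apply: (con_gen_on_least epsC).
- apply: (con_gen_on_least epsC) => p ps.
  exact: (congr_trans epsC (congr_sym epsC (lo_zi p ps)) (con_gen_lo_hi ps)).
- apply: (con_gen_least rhoC) => {}x {}y xy; apply/(congr_meet_join rhoC).
  exact: (congr_trans rhoC (con_joinl _ _ (split_lo_gen i xy))
                             (con_joinr _ _ (split_hi_gen i xy))).
Qed.

End Splitting.

Theorem theorem1p5 (d : Order.disp_t) (L : latticeType d) :
  congruence_permutable L -> ConcL_URP1 L.
Proof.
move=> permL eps [s eps_s] I a b ab_eps.
have aC i : is_congruence (a i) by case: (ab_eps i) => /compact_congruence.
have bC i : is_congruence (b i) by case: (ab_eps i) => _ /compact_congruence.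
have split_at i p : exists w, p \in s ->
    [/\ lo p <= w, w <= hi p, a i (lo p) w & b i w (hi p)].
  apply: (con_gen_interpolate permL p (aC i) (bC i)) => x y /(eps_s x y).
  by case: (ab_eps i) => _ _ /(_ x y) [].
have [z zP] := choice2 split_at.
have lo_z i p : p \in s -> lo p <= z i p by move=> ps; case: (zP i p ps).
have z_hi i p : p \in s -> z i p <= hi p by move=> ps; case: (zP i p ps).
exists (split_lo s z), (split_hi s z), (split_gap s z).
split; first by move=> i; split; apply: con_gen_on_compact.
split; first by move=> i j; apply: con_gen_on_compact.
split.
  move=> i; split.
  - by apply: (con_gen_on_least (aC i)) => p ps; case: (zP i p ps).
  - by apply: (con_gen_on_least (bC i)) => p ps; case: (zP i p ps).
  - by move=> x y; apply: iff_trans (split_join_eq lo_z z_hi i x y) (iff_sym (eps_s x y)).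
split; first by move=> i j; split; [apply: split_gap_le_lo | apply: split_gap_le_hi].
split; first by move=> i j; split; [apply: split_lo_le_gap | apply: split_hi_le_gap].
by move=> i j k; apply: split_gap_trans.
Qed.
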